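(* Consider a single-item auction setting with a feature space $\mathcal{Z}$, $n$ buyers each with unit demand and a single seller with supply $\lambda > 0$ and cost $c = 0$. Conditioned on each feature vector $z$, the buyers' bids $b_1,\dots,b_n$ are independent with $b_i \sim F_i^z$. For a pricing policy $p:\mathcal{Z}\to\mathbb{R}$ the clearing loss is $$\ell^c(p,z,\mathbf{b},c) = \sum_{i=1}^n \max\{b_i - p(z),0\} + \lambda \max\{p(z)-c,0\}.$$ Let $p$ be the pricing policy minimizing the expected clearing loss (i.e., for each $z$, $p(z)$ solves $\sum_{i=1}^n (1-F_i^z(p(z))) = \lambda$). Then the expected match rate under $p$ is at least $1-e^{-\lambda}$, where the match rate at price $p$ on a data point is ${\sf MR}(p) = \mathbf{1}[b^{(1)} \ge \max\{p,c\}]$ with $b^{(1)} = \max_i b_i$ the highest bid.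
   Context: $\mathbf{1}[\cdot]$ is the indicator function. The match rate is the indicator that the item is sold in a second-price auction with reserve price $\max\{p,c\}$. *)

From HB Require Import structures.
From mathcomp Require Import all_boot all_order all_algebra.
From mathcomp Require Import all_classical all_reals all_analysis.
Set Implicit Arguments. Unset Strict Implicit. Unset Printing Implicit Defensive.
Import Order.TTheory GRing.Theory Num.Theory.
Local Open Scope classical_set_scope.
Local Open Scope ring_scope.

Definition mutually_independent_rv {d} (Omega : measurableType d)
  (R : realType) (P : probability Omega R) (n : nat) (b : 'I_n -> Omega -> R) :=
  forall (S : {set 'I_n}) (A : 'I_n -> set R),
    (forall i, measurable (A i)) ->
    P (\bigcap_(i in [set i | i \in S]) (b i @^-1` A i)) =
    (\prod_(i in S) P (b i @^-1` A i))%E.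

(* Match rate indicator event at price pr with seller cost c:
   the highest bid is at least max{pr, c}, i.e. some bid is at least max{pr,c}. *)
Definition match_event {d} (Omega : measurableType d) (R : realType) (n : nat)
  (b : 'I_n -> Omega -> R) (pr c : R) : set Omega :=
  [set w | exists i : 'I_n, Num.max pr c <= b i w].

(** Fix a feature z. The item goes unsold exactly when every bid falls below
  max (p z) 0, so by independence the no-sale probability is the product of
  the probabilities P(b_i < max (p z) 0), each of which is at most F_i(p z)
  since bids are nonnegative. With q <= exp (q - 1) this product is at most
  exp (sum_i (F_i(p z) - 1)) = exp (- lambda). The conditional match rate is
  thus at least 1 - exp (- lambda) for every z, and so is its mean. *)
From HB Require Import structures.
From mathcomp Require Import all_boot all_order all_algebra.
From mathcomp Require Import all_classical all_reals all_analysis.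
Import Order.TTheory GRing.Theory Num.Theory.
Local Open Scope classical_set_scope.
Local Open Scope ring_scope.

(* The integral of a nonnegative function is a supremum over the simple
   functions below it, so monotonicity needs no measurability. *)
Lemma ge0_le_integralT (R : realType) (d : measure_display)
    (T : measurableType d) (mu : measure T R) (f g : T -> \bar R) :
  (forall x, 0 <= f x)%E -> (forall x, f x <= g x)%E ->
  (\int[mu]_x f x <= \int[mu]_x g x)%E.
Proof.
move=> f0 fg; have g0 x : (0 <= g x)%E by exact: le_trans (fg x).
rewrite (ge0_integralTE mu f0) (ge0_integralTE mu g0).
apply: ereal_sup_le => _ [h hf <-]; exists h => //= x.
exact: le_trans (hf x) (fg x).
Qed.

Lemma probability_integral_ge_cst (R : realType) (d : measure_display)
    (T : measurableType d) (P : probability T R) (f : T -> \bar R) (c : R) :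
  0 <= c -> (forall x, c%:E <= f x)%E -> (c%:E <= \int[P]_x f x)%E.
Proof.
move=> c0 cf.
have -> : c%:E = (\int[P]_x cst c%:E x)%E.
  rewrite integral_cst // -[LHS]mule1; congr (_ * _)%E.
  exact/esym/probability_setT.
by apply: ge0_le_integralT => // x; rewrite lee_fin.
Qed.

Lemma prod_le_expR_sum {R : realType} {I : Type} (r : seq I) (q : I -> R) :
  (forall i, 0 <= q i) -> \prod_(i <- r) q i <= expR (\sum_(i <- r) (q i - 1)).
Proof.
move=> q0; rewrite expR_sum; apply: ler_prod => i _.
by rewrite q0 /= -[leLHS](subrK 1) addrC expR_ge1Dx.
Qed.

Lemma match_eventC (d : measure_display) (Omega : measurableType d)
    (R : realType) (n : nat) (b : 'I_n -> Omega -> R) (pr c : R) :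
  ~` match_event b pr c =
  \bigcap_(i in [set i | i \in [set: 'I_n]%SET]) b i @^-1` `]-oo, Num.max pr c[.
Proof.
apply/seteqP; split => w.
- move=> no_match i _ /=; rewrite in_itv /= ltNge.
  by apply/negP => bi_ge; apply: no_match; exists i.
- move=> all_below [i bi_ge].
  have := all_below i; rewrite /= inE in_itv /= ltNge bi_ge.
  by move/(_ isT).
Qed.

Section IndependentBids.
Context {R : realType} {d : measure_display} {Omega : measurableType d}.
Context {P : probability Omega R} {n : nat} {b : 'I_n -> Omega -> R}.
Hypothesis measurable_b : forall i, measurable_fun setT (b i).
Hypothesis independent_b : mutually_independent_rv P b.

Lemma measurable_bid_preimage i (Y : set R) :
  measurable Y -> measurable (b i @^-1` Y).
Proof. by move=> mY; rewrite -[_ @^-1` _]setTI; exact: measurable_b. Qed.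

Lemma probability_match_event pr c :
  P (match_event b pr c) =
  (1 - \prod_(i in [set: 'I_n]%SET) P (b i @^-1` `]-oo, Num.max pr c[))%E.
Proof.
rewrite -[match_event _ _ _]setCK match_eventC probability_setC.
  by rewrite independent_b // => i; exact: measurable_itv.
apply: fin_bigcap_measurable; first exact: finite_finset.
by move=> i _; apply: measurable_bid_preimage; exact: measurable_itv.
Qed.

Hypothesis b_ge0 : forall i w, 0 <= b i w.

Lemma probability_match_event_ge (F : 'I_n -> R -> R) (pr : R) :
  (forall i x, P [set w | b i w <= x] = (F i x)%:E) ->
  ((1 - expR (- \sum_(i < n) (1 - F i pr)))%:E <= P (match_event b pr 0))%E.
Proof.
move=> cdf_b; rewrite probability_match_event.
pose below i := b i @^-1` `]-oo, Num.max pr 0[.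
have mbelow i : measurable (below i).
  by apply: measurable_bid_preimage; exact: measurable_itv.
pose q i := fine (P (below i)).
have Pbelow i : P (below i) = (q i)%:E.
  by rewrite /q fineK // fin_num_measure.
have q0 i : 0 <= q i by rewrite -lee_fin -Pbelow measure_ge0.
(* For pr < 0 this needs nonnegative bids: b_i < max pr 0 is then empty. *)
have qF i : q i <= F i pr.
  rewrite -lee_fin -Pbelow -cdf_b; apply: le_measure; rewrite ?inE //.
    by rewrite -[X in measurable X]/(b i @^-1` `]-oo, pr]);
      apply: measurable_bid_preimage; exact: measurable_itv.
  move=> w; rewrite /below /= in_itv /= lt_max => /orP[/ltW //|].
  by rewrite ltNge b_ge0.
rewrite (eq_bigr (fun i => (q i)%:E)) => [|i _]; last exact: Pbelow.
rewrite prodEFin -EFinB lee_fin lerD2l lerN2 -sumrN.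
rewrite (eq_bigl xpredT) => [|i]; last by rewrite inE.
apply: le_trans (prod_le_expR_sum _ _ q0) _; rewrite ler_expR.
by apply: ler_sum => i _; rewrite opprB lerD2r.
Qed.

End IndependentBids.

Theorem mainTheorem2 (R : realType)
  (dZ : measure_display) (Z : measurableType dZ) (PZ : probability Z R)
  (dO : measure_display) (Omega : measurableType dO) (Q : Z -> probability Omega R)
  (n : nat) (b : 'I_n -> Omega -> R) (F : 'I_n -> Z -> R -> R)
  (lambda : R) (p : Z -> R) :
  0 < lambda ->
  (forall i, measurable_fun setT (b i)) ->
  (forall i w, 0 <= b i w) ->
  (forall z, mutually_independent_rv (Q z) b) ->
  (forall i z x, Q z [set w | b i w <= x] = (F i z x)%:E) ->
  (forall z, \sum_(i < n) (1 - F i z (p z)) = lambda) ->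
  ((1 - expR (- lambda))%:E <= \int[PZ]_z Q z (match_event b (p z) 0))%E.
Proof.
move=> lambda_gt0 mb b_ge0 indep cdf_b clearing.
apply: probability_integral_ge_cst => [|z].
  by rewrite subr_ge0 expR_le1 oppr_le0 ltW.
rewrite -(clearing z).
exact: probability_match_event_ge mb (indep z) b_ge0 _ _ (fun i => cdf_b i z).
Qed.
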